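(* Let $r\ge 1$, let $(s_1,\ldots,s_r)$ be an $r$-tuple of positive integers, and let $n\ge r$ be an integer. Then $H^{\star}_n(s_1,\ldots,s_r)$ is not an integer, except in the case $n=r=1$, where $H^{\star}_1(s_1)=1$.
   Context: For an $r$-tuple of positive integers $(s_1,\ldots,s_r)$ and an integer $n\ge r$, the multiple harmonic star sum is $H^{\star}_n(s_1,\ldots,s_r)=\sum_{1\le k_1\le k_2\le\cdots\le k_r\le n}\frac{1}{k_1^{s_1}\cdots k_r^{s_r}}$, the sum over all non-decreasing $r$-tuples of integers in $\{1,\dots,n\}$. *)

From HB Require Import structures.
From mathcomp Require Import all_boot all_order all_algebra.
Set Implicit Arguments. Unset Strict Implicit. Unset Printing Implicit Defensive.
Import Order.TTheory GRing.Theory Num.Theory.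
Local Open Scope ring_scope.

(* The exponent tuple is s : 'I_r -> nat (s_i = s i, 0-indexed);
   an index tuple is k : {ffun 'I_r -> 'I_n}, where the ordinal value
   k i represents the integer k_i = (k i).+1 in {1,...,n}. *)
Definition Hstar (n r : nat) (s : 'I_r -> nat) : rat :=
  \sum_(k : {ffun 'I_r -> 'I_n} |
          [forall i : 'I_r, forall j : 'I_r, (i <= j)%N ==> (k i <= k j)%N])
     \prod_(i < r) ((((k i).+1)%:R : rat) ^+ (s i))^-1.

From HB Require Import structures.
From mathcomp Require Import all_boot all_order all_algebra.
From mathcomp Require Import ring zify.
Import Order.TTheory GRing.Theory Num.Theory.
Local Open Scope ring_scope.

(* Let 2^a be the largest power of 2 that is at most n and S = s_1 + ... + s_r.
   The tuple k = (2^a, ..., 2^a) contributes 2^(-aS), while every other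
   non-decreasing tuple has some k_j with 2-adic valuation at most a - 1,
   so its term has 2-adic valuation greater than -aS.  Hence 2^(aS-1) H*_n(s)
   is 1/2 plus a rational with odd denominator, and H*_n(s) is not an integer. *)

Definition two_integral (x : rat) : Prop :=
  exists2 q : nat, odd q & x * q%:R \is a Num.int.

Lemma int_two_integral x : x \is a Num.int -> two_integral x.
Proof. by exists 1%N; rewrite ?mulr1. Qed.

Lemma two_integralD x y :
  two_integral x -> two_integral y -> two_integral (x + y).
Proof.
move=> [q1 o1 h1] [q2 o2 h2]; exists (q1 * q2)%N; first by rewrite oddM o1 o2.
have -> : (x + y) * (q1 * q2)%N%:R = x * q1%:R * q2%:R + y * q2%:R * q1%:R.
  by rewrite natrM; ring.
by rewrite rpredD // rpredM // natr_int.
Qed.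

Lemma two_integralN x : two_integral x -> two_integral (- x).
Proof. by move=> [q o h]; exists q; rewrite // mulNr rpredN. Qed.

Lemma two_integralM x y :
  two_integral x -> two_integral y -> two_integral (x * y).
Proof.
move=> [q1 o1 h1] [q2 o2 h2]; exists (q1 * q2)%N; first by rewrite oddM o1 o2.
have -> : x * y * (q1 * q2)%N%:R = (x * q1%:R) * (y * q2%:R).
  by rewrite natrM; ring.
exact: rpredM.
Qed.

Lemma two_integral_sum (I : Type) (r : seq I) (P : pred I) (F : I -> rat) :
  (forall i, P i -> two_integral (F i)) -> two_integral (\sum_(i <- r | P i) F i).
Proof.
by apply: big_ind; [exact/int_two_integral/rpred0 | exact: two_integralD].
Qed.

Lemma half_not_two_integral : ~ two_integral 2%:R^-1.
Proof.
move=> [q o]; rewrite intrEge0 ?mulr_ge0 ?invr_ge0 ?ler0n //.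
case/natrP=> m hm.
have /eqP : (q%:R : rat) = (2 * m)%N%:R.
  by rewrite natrM -hm mulrA mulfV ?mul1r ?pnatr_eq0.
by rewrite eqr_nat => /eqP qE; rewrite qE oddM in o.
Qed.

(* The odd part of k^e is the witness. *)
Lemma two_integral_pow2_divX (k e : nat) :
  (0 < k)%N -> two_integral (2%:R ^+ (logn 2 k * e) / k%:R ^+ e).
Proof.
move=> k_gt0; have [o co kE] := pfactor_coprime (isT : prime 2) k_gt0.
have o_odd : odd o by rewrite -coprime2n.
have o_neq0 : (o%:R : rat) != 0 by rewrite pnatr_eq0; apply: contraTneq o_odd => ->.
exists (o ^ e)%N; first by rewrite oddX o_odd orbT.
rewrite [in k%:R]kE natrM !natrX exprMn -!exprM.
suff -> : 2%:R ^+ (logn 2 k * e) / (o%:R ^+ e * 2%:R ^+ (logn 2 k * e))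
    * o%:R ^+ e = 1 :> rat by exact: rpred1.
by field; rewrite !expf_neq0.
Qed.

Lemma two_integral_pow2_prod (I : finType) (k e : I -> nat) (c : nat) :
  (forall i, 0 < k i)%N -> (\sum_i logn 2 (k i) * e i <= c)%N ->
  two_integral (2%:R ^+ c * \prod_i ((k i)%:R ^+ e i)^-1).
Proof.
move=> k_gt0 le_c.
have prodE : 2%:R ^+ (\sum_i logn 2 (k i) * e i) * \prod_i ((k i)%:R ^+ e i)^-1
    = \prod_i (2%:R ^+ (logn 2 (k i) * e i) / (k i)%:R ^+ e i) :> rat.
  rewrite big_split /=; congr (_ * _).
  by rewrite (big_morph _ (@exprD rat 2%:R) (expr0 _)).
rewrite -(subnKC le_c) exprD -mulrA mulrCA prodE.
apply: two_integralM; first by apply/int_two_integral; rewrite rpredX ?natr_int.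
apply: big_ind => [|x y|i _]; [exact/int_two_integral/rpred1 | exact: two_integralM |].
exact: two_integral_pow2_divX.
Qed.

Lemma logn2_le_trunc_log [n k] : (0 < k)%N -> (k <= n)%N ->
  (logn 2 k <= trunc_log 2 n)%N.
Proof.
move=> k_gt0 le_kn; apply: trunc_log_max => //.
exact: leq_trans (dvdn_leq k_gt0 (pfactor_dvdnn 2 k)) le_kn.
Qed.

(* With a = trunc_log 2 n, a multiple of 2^a that is at most n < 2^(a+1) is 2^a. *)
Lemma logn2_lt_trunc_log [n k] : (0 < k)%N -> (k <= n)%N ->
  k != (2 ^ trunc_log 2 n)%N -> (logn 2 k < trunc_log 2 n)%N.
Proof.
move=> k_gt0 le_kn k_neq; rewrite ltn_neqAle logn2_le_trunc_log // andbT.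
apply: contra k_neq => /eqP vE; have := pfactor_dvdnn 2 k.
rewrite vE => /dvdnP[c kE].
have := trunc_log_ltn n (isT : (1 < 2)%N); rewrite expnS.
have c_gt0 : (0 < c)%N by move: k_gt0; rewrite kE muln_gt0 => /andP[].
move: le_kn; rewrite kE => le_cMn lt_n2M.
have c1 : c = 1%N by nia.
by rewrite c1 mul1n.
Qed.

Lemma Hstar_1_1 (s : 'I_1 -> nat) : Hstar 1 s = 1.
Proof.
rewrite /Hstar (eq_bigl predT) => [|k]; last first.
  by apply/forallP => i; apply/forallP => j; rewrite !ord1.
rewrite (eq_bigr (fun _ => 1)) => [|k _]; last first.
  by apply: big1 => i _; rewrite (ord1 (k i)) expr1n invr1.
by rewrite sumr_const card_ffun !card_ord.
Qed.

Section NonInteger.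

Variables (n r : nat) (s : 'I_r -> nat).
Hypothesis s_gt0 : forall i, (0 < s i)%N.

Let a := trunc_log 2 n.
Let S := (\sum_(i < r) s i)%N.

Lemma term_valuation_lt (k : {ffun 'I_r -> 'I_n}) j :
  (k j).+1 != (2 ^ a)%N -> (\sum_i logn 2 (k i).+1 * s i < a * S)%N.
Proof.
move=> kj_neq; have lt_j := logn2_lt_trunc_log (ltn0Sn (k j)) (ltn_ord (k j)) kj_neq.
rewrite /S big_distrr /= (bigD1 j) // [X in (_ < X)%N](bigD1 j) //=.
rewrite -addSn leq_add //.
  by rewrite ltn_pmul2r.
by apply: leq_sum => i _; rewrite leq_mul2r logn2_le_trunc_log ?orbT.
Qed.

Lemma Hstar_not_int : (1 < n)%N -> (0 < r)%N -> Hstar n s \isn't a Num.int.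
Proof.
move=> n_gt1 r_gt0; have a_gt0 : (0 < a)%N by rewrite trunc_log_gt0.
have S_gt0 : (0 < S)%N by rewrite /S (bigD1 (Ordinal r_gt0)) // addn_gt0 s_gt0.
have pow_lt_n : ((2 ^ a).-1 < n)%N by rewrite prednK ?expn_gt0 // trunc_logP // ltnW.
set k0 : {ffun 'I_r -> 'I_n} := [ffun => Ordinal pow_lt_n].
have k0_term : 2%:R ^+ (a * S).-1 * \prod_i ((k0 i).+1%:R ^+ s i)^-1 = 2%:R^-1 :> rat.
  rewrite (eq_bigr (fun i => ((2 ^ a)%N%:R ^+ s i)^-1)) => [|i _]; last first.
    by rewrite ffunE /= prednK ?expn_gt0.
  rewrite prodfV prodrXr natrX -exprM -/S.
  rewrite -{2}(prednK (_ : 0 < a * S)%N) ?muln_gt0 ?a_gt0 // exprS invfM mulrA mulrAC.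
  by rewrite mulfV ?mul1r // expf_neq0.
rewrite /Hstar (bigD1 k0) /=; last first.
  by apply/forallP => i; apply/forallP => j; rewrite !ffunE leqnn implybT.
set rest := (\sum_(k | _) _); apply/negP => sum_int; apply: half_not_two_integral.
have -> : 2%:R^-1 = 2%:R ^+ (a * S).-1 * (\prod_i ((k0 i).+1%:R ^+ s i)^-1 + rest)
    - 2%:R ^+ (a * S).-1 * rest.
  by rewrite mulrDr k0_term addrK.
apply: two_integralD; first by apply/int_two_integral; rewrite rpredM ?rpredX ?natr_int.
rewrite /rest mulr_sumr; apply/two_integralN/two_integral_sum => k /andP[_ k_neq].
apply: two_integral_pow2_prod => //; rewrite -ltnS prednK ?muln_gt0 ?a_gt0 //.
have [j kj_neq] : exists j, (k j).+1 != (2 ^ a)%N.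
  apply/existsP; apply: contraR k_neq; rewrite negb_exists => /forallP k_eq.
  apply/eqP/ffunP => i; apply: val_inj; rewrite ffunE /=.
  by rewrite -(eqP (negPn (k_eq i))).
exact: term_valuation_lt kj_neq.
Qed.

End NonInteger.

Theorem theorem1 (r : nat) (s : 'I_r -> nat) (n : nat) :
  (1 <= r)%N -> (forall i, (0 < s i)%N) -> (r <= n)%N ->
  (~ (n = 1%N /\ r = 1%N) -> Hstar n s \isn't a Num.int) /\
  (n = 1%N /\ r = 1%N -> Hstar n s = 1).
Proof.
move=> r_gt0 s_gt0 le_rn; split => [not_11 | [-> r1]].
  by apply: Hstar_not_int => //; case: n not_11 le_rn => [|[|]] //; lia.
by subst r; exact: Hstar_1_1.
Qed.
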